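(* With $B_n$ as in the context and $L_n=|B_n|$, one has $\lim_{n\to\infty} L_{n+1}/L_n=\alpha$, where $\alpha\approx 2.20557$ is the unique real root of $x^3-2x^2-1=0$.
   Context: Generation operator: for a finite vector $R=\langle r_1,\dots,r_m\rangle$ of positive integers and $s\in\{1,3\}$, $\mathcal{G}(R,s)= s^{r_1}\,(4-s)^{r_2}\,s^{r_3}\cdots$ (the $i$-th run consists of $r_i$ copies of $s$ if $i$ is odd and of $4-s$ if $i$ is even), of length $\sum_i r_i$. For a finite word $W$ over $\{1,3\}$, $R(W)$ denotes $W$ itself regarded as a vector of positive integers. Define $B_1=\mathcal{G}(\langle 1,3,3,3,1\rangle,1)=1\,3\,3\,3\,1\,1\,1\,3\,3\,3\,1$, $P_1=3$, and for $n\ge1$: $B_{n+1}=B_n\,P_n\,B_n$ (concatenation), $P_{n+1}=\mathcal{G}(R(P_n),3)$. *)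

From Stdlib Require Import Reals List Arith.
Import ListNotations.

(* Generation operator G(R, s): the i-th run has r_i copies of s (i odd)
   or of 4 - s (i even). *)
Fixpoint gen (r : list nat) (s : nat) : list nat :=
  match r with
  | [] => []
  | x :: r' => repeat s x ++ gen r' (4 - s)
  end.

Definition B1 : list nat := gen [1; 3; 3; 3; 1] 1.
Definition P1 : list nat := [3].

(* BP k = (B_{k+1}, P_{k+1}); R(W) is W itself. *)
Fixpoint BP (k : nat) : list nat * list nat :=
  match k with
  | 0 => (B1, P1)
  | S k' => let (b, p) := BP k' in (b ++ p ++ b, gen p 3)
  end.

(* B n for n >= 1 (B 0 is a junk copy of B 1). *)
Definition B (n : nat) : list nat := fst (BP (n - 1)).
Definition L (n : nat) : nat := length (B n).

From Stdlib Require Import Reals List Lia Lra Psatz.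
Import ListNotations.

(* Count the letters 3 and 1 of P_k separately at even and odd positions.
   Since every run of G(P_k, 3) has odd length, the i-th run starts at a
   position of the parity of i, so these four counts evolve linearly: three of
   them satisfy x_{k+3} = 2 x_{k+2} + x_k, with characteristic polynomial
   x^3 - 2x^2 - 1, and the fourth accumulates one of the others.  The two
   complex roots have modulus alpha^(-1/2) < 1, so x_{k+1} - alpha x_k decays
   geometrically for the first three counts and stays bounded for the fourth,
   hence for |P_k|.  Then L_{k+2} = 2 L_{k+1} + |P_k| gives
   L_{k+2} - alpha L_{k+1} = O(2^k), while L_{k+1} grows like (11/5)^k at
   least, so L_{k+2} / L_{k+1} tends to alpha. *)

Fixpoint parity_count (v : nat) (q : bool) (w : list nat) : nat :=
  match w with
  | [] => 0
  | x :: w' => (if andb q (x =? v) then 1 else 0) + parity_count v (negb q) w'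
  end.

Definition word13 (w : list nat) : Prop := Forall (fun x => x = 1 \/ x = 3) w.

Lemma gen_word13 (w : list nat) (q : bool) : word13 (gen w (if q then 3 else 1)).
Proof.
  revert q; induction w as [|x w IH]; intros q; [constructor|].
  apply Forall_app; split.
  - apply Forall_forall; intros y Hy; apply repeat_spec in Hy; destruct q; lia.
  - destruct q; [exact (IH false) | exact (IH true)].
Qed.

Lemma length_parity_count (w : list nat) (q : bool) : word13 w ->
  length w = parity_count 3 q w + parity_count 3 (negb q) w
             + parity_count 1 q w + parity_count 1 (negb q) w.
Proof.
  revert q; induction w as [|x w IH]; intros q Hw; [reflexivity|].
  inversion Hw as [|? ? Hx Hw']; subst.
  specialize (IH (negb q) Hw'); rewrite Bool.negb_involutive in IH.
  destruct q, Hx; subst; simpl in *; lia.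
Qed.

Lemma parity_count_gen (w : list nat) (q : bool) : word13 w ->
  let g := gen w (if q then 3 else 1) in
  parity_count 3 q g = 2 * parity_count 3 q w + parity_count 1 q w /\
  parity_count 3 (negb q) g = parity_count 3 q w /\
  parity_count 1 q g = parity_count 3 (negb q) w /\
  parity_count 1 (negb q) g = 2 * parity_count 3 (negb q) w + parity_count 1 (negb q) w.
Proof.
  revert q; induction w as [|x w IH]; intros q Hw; [repeat split|].
  inversion Hw as [|? ? Hx Hw']; subst.
  specialize (IH (negb q) Hw'); rewrite Bool.negb_involutive in IH.
  destruct q, Hx; subst; simpl in *; lia.
Qed.

Definition P (k : nat) : list nat := snd (BP k).

(* [P k] is the word P_(k+1); [count v q k] counts the letter [v] at its even
   (q = true) or odd 0-based positions. *)
Definition count (v : nat) (q : bool) (k : nat) : nat := parity_count v q (P k).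

Lemma BP_succ (k : nat) :
  BP (S k) = (fst (BP k) ++ P k ++ fst (BP k), gen (P k) 3).
Proof. unfold P; simpl; destruct (BP k); reflexivity. Qed.

Lemma P_succ (k : nat) : P (S k) = gen (P k) 3.
Proof. unfold P at 1; rewrite BP_succ; reflexivity. Qed.

Lemma P_word13 (k : nat) : word13 (P k).
Proof.
  destruct k as [|k].
  - repeat constructor; right; reflexivity.
  - rewrite P_succ; exact (gen_word13 _ true).
Qed.

Lemma count_succ (k : nat) :
  count 3 true (S k) = 2 * count 3 true k + count 1 true k /\
  count 3 false (S k) = count 3 true k /\
  count 1 true (S k) = count 3 false k /\
  count 1 false (S k) = 2 * count 3 false k + count 1 false k.
Proof.
  unfold count; rewrite P_succ.
  exact (parity_count_gen _ true (P_word13 k)).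
Qed.

Lemma L_succ (k : nat) : L (S k) = length (fst (BP k)).
Proof. unfold L, B; rewrite Nat.sub_succ, Nat.sub_0_r; reflexivity. Qed.

Lemma L_rec (k : nat) :
  L (S (S k)) = 2 * L (S k) + (count 3 true k + count 3 false k + count 1 true k + count 1 false k).
Proof.
  rewrite !L_succ, BP_succ; simpl fst.
  rewrite !length_app, (length_parity_count _ true (P_word13 k)); unfold count; simpl; lia.
Qed.

Lemma count_cubic_rec (k : nat) :
  count 3 true (S (S (S k))) = 2 * count 3 true (S (S k)) + count 3 true k /\
  count 3 false (S (S (S k))) = 2 * count 3 false (S (S k)) + count 3 false k /\
  count 1 true (S (S (S k))) = 2 * count 1 true (S (S k)) + count 1 true k.
Proof.
  pose proof (count_succ k); pose proof (count_succ (S k)); pose proof (count_succ (S (S k))).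
  lia.
Qed.

Lemma count_le_L (k : nat) : count 3 true k <= L (S k).
Proof.
  induction k as [|k IH]; [apply Nat.leb_le; reflexivity|].
  rewrite L_rec; destruct (count_succ k) as [-> _]; lia.
Qed.

Open Scope R_scope.

Definition defect (al : R) (u : nat -> R) (m : nat) : R := u (S m) - al * u m.

Definition cubic_rec (x : nat -> R) : Prop :=
  forall m, x (S (S (S m))) = 2 * x (S (S m)) + x m.

Definition geom_bounded (u : nat -> R) (r : R) : Prop :=
  exists K, forall m, Rabs (u m) <= K * r ^ m.

Lemma geom_bound_nonneg (u : nat -> R) (r K : R) :
  (forall m, Rabs (u m) <= K * r ^ m) -> 0 <= K.
Proof.
  intros HK; specialize (HK 0%nat); pose proof (Rabs_pos (u 0%nat)); simpl in HK; lra.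
Qed.

Lemma geom_bounded_plus (u v : nat -> R) (r : R) :
  geom_bounded u r -> geom_bounded v r -> geom_bounded (fun m => u m + v m) r.
Proof.
  intros [K HK] [K' HK']; exists (K + K'); intros m.
  pose proof (Rabs_triang (u m) (v m)); specialize (HK m); specialize (HK' m); lra.
Qed.

Lemma geom_bounded_scale (u : nat -> R) (r c : R) :
  geom_bounded u r -> geom_bounded (fun m => c * u m) r.
Proof.
  intros [K HK]; exists (Rabs c * K); intros m.
  rewrite Rabs_mult, Rmult_assoc; apply Rmult_le_compat_l; [apply Rabs_pos | apply HK].
Qed.

Lemma geom_bounded_le (u : nat -> R) (r s : R) :
  0 <= r <= s -> geom_bounded u r -> geom_bounded u s.
Proof.
  intros Hrs [K HK]; exists K; intros m.
  pose proof (geom_bound_nonneg _ _ _ HK).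
  assert (r ^ m <= s ^ m) by (apply pow_incr; lra).
  specialize (HK m); nra.
Qed.

Lemma geom_bounded_first_order (u v : nat -> R) (la r : R) :
  0 <= r < la -> (forall m, u (S m) = la * u m + v m) ->
  geom_bounded v r -> geom_bounded u la.
Proof.
  intros Hr Hu [K HK].
  pose proof (geom_bound_nonneg _ _ _ HK) as HK0.
  set (M := K / (la - r)).
  assert (HM : K + M * r = M * la) by (unfold M; field; lra).
  assert (HM0 : 0 <= M)
    by (unfold M; apply Rmult_le_pos; [lra | left; apply Rinv_0_lt_compat; lra]).
  (* [M * r ^ m] absorbs the remaining contribution of [v], as K + M r = M la. *)
  assert (Hinv : forall m, Rabs (u m) + M * r ^ m <= (Rabs (u 0%nat) + M) * la ^ m).
  { induction m as [|m IH]; [simpl; lra|].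
    rewrite Hu; simpl pow.
    pose proof (Rabs_triang (la * u m) (v m)).
    rewrite Rabs_mult, (Rabs_pos_eq la) in H by lra.
    specialize (HK m).
    assert (la * (Rabs (u m) + M * r ^ m) <= la * ((Rabs (u 0%nat) + M) * la ^ m))
      by (apply Rmult_le_compat_l; lra).
    nra. }
  exists (Rabs (u 0%nat) + M); intros m.
  specialize (Hinv m); assert (0 <= M * r ^ m) by (apply Rmult_le_pos; [|apply pow_le]; lra).
  lra.
Qed.

Lemma geom_bounded_second_order (g : nat -> R) (s t rho : R) :
  0 < rho -> Rabs s * rho + Rabs t <= rho ^ 2 ->
  (forall m, g (S (S m)) = s * g (S m) + t * g m) -> geom_bounded g rho.
Proof.
  intros Hrho Hst Hg.
  set (G := Rabs (g 0%nat) + Rabs (g 1%nat) / rho).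
  assert (HG : 0 <= G).
  { assert (0 <= Rabs (g 1%nat) / rho)
      by (apply Rmult_le_pos; [apply Rabs_pos | left; apply Rinv_0_lt_compat; lra]).
    unfold G; pose proof (Rabs_pos (g 0%nat)); lra. }
  assert (Hinv : forall m, Rabs (g m) <= G * rho ^ m /\ Rabs (g (S m)) <= G * rho ^ S m).
  { induction m as [|m [IH1 IH2]].
    - assert (Rabs (g 1%nat) / rho * rho = Rabs (g 1%nat)) by (field; lra).
      pose proof (Rabs_pos (g 0%nat)); pose proof (Rabs_pos (g 1%nat)).
      simpl; unfold G; split; nra.
    - split; [exact IH2|]. rewrite Hg.
      pose proof (Rabs_triang (s * g (S m)) (t * g m)); rewrite !Rabs_mult in H.
      assert (Rabs s * Rabs (g (S m)) <= Rabs s * (G * rho ^ S m))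
        by (apply Rmult_le_compat_l; [apply Rabs_pos | exact IH2]).
      assert (Rabs t * Rabs (g m) <= Rabs t * (G * rho ^ m))
        by (apply Rmult_le_compat_l; [apply Rabs_pos | exact IH1]).
      assert (0 <= G * rho ^ m) by (apply Rmult_le_pos; [|apply pow_le]; lra).
      assert ((Rabs s * rho + Rabs t) * (G * rho ^ m) <= rho ^ 2 * (G * rho ^ m))
        by (apply Rmult_le_compat_r; lra).
      simpl pow in *. nra. }
  exists G; intros m; apply Hinv.
Qed.

Lemma cubic_rec_lower_bound (x : nat -> R) (c be : R) :
  0 <= c -> 0 <= be -> be ^ 3 <= 2 * be ^ 2 + 1 ->
  cubic_rec x -> c <= x 0%nat -> c * be <= x 1%nat -> c * be ^ 2 <= x 2%nat ->
  forall m, c * be ^ m <= x m.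
Proof.
  intros Hc Hbe Hbe3 Hx H0 H1 H2.
  assert (Hinv : forall m, c * be ^ m <= x m /\ c * be ^ S m <= x (S m)
                           /\ c * be ^ S (S m) <= x (S (S m))).
  { induction m as [|m (IH0 & IH1 & IH2)]; [simpl in *; lra|].
    do 2 (split; [assumption|]). rewrite Hx.
    assert (0 <= c * be ^ m) by (apply Rmult_le_pos; [|apply pow_le]; lra).
    assert (c * be ^ m * be ^ 3 <= c * be ^ m * (2 * be ^ 2 + 1))
      by (apply Rmult_le_compat_l; lra).
    simpl pow in *. nra. }
  intros m; apply Hinv.
Qed.

Lemma ratio_cv_of_defect (al c be la : R) (y : nat -> R) :
  0 < c -> 0 <= la < be -> (forall m, c * be ^ m <= y m) ->
  geom_bounded (defect al y) la -> Un_cv (fun m => y (S m) / y m) al.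
Proof.
  intros Hc Hla Hy [K HK] eps Heps.
  pose proof (geom_bound_nonneg _ _ _ HK) as HK0.
  set (q := la / be).
  assert (Hq : q * be = la) by (unfold q; field; lra).
  assert (Hq0 : 0 <= q)
    by (unfold q; apply Rmult_le_pos; [lra | left; apply Rinv_0_lt_compat; lra]).
  set (e := eps * c / (K + 1)).
  assert (He : K * e < eps * c) by (unfold e; apply (Rmult_lt_reg_r (K + 1)); [lra|];
    replace (K * (eps * c / (K + 1)) * (K + 1)) with (K * (eps * c)) by (field; lra); nra).
  destruct (pow_lt_1_zero q) with (y := e) as [N HN].
  { rewrite Rabs_pos_eq by lra; nra. }
  { unfold e; apply Rdiv_lt_0_compat; nra. }
  exists N; intros m Hm; unfold R_dist.
  specialize (HN m Hm); specialize (HK m); specialize (Hy m).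
  rewrite Rabs_pos_eq in HN by (apply pow_le; lra).
  rewrite <- Hq, Rpow_mult_distr in HK.
  assert (Hbe : 0 < be ^ m) by (apply pow_lt; lra).
  assert (Hym : 0 < y m) by nra.
  assert (Hdef : y (S m) / y m - al = defect al y m * / y m) by (unfold defect; field; lra).
  rewrite Hdef, Rabs_mult, Rabs_inv, (Rabs_pos_eq (y m)) by lra.
  apply (Rmult_lt_reg_r (y m)); [lra|].
  rewrite Rmult_assoc, Rinv_l, Rmult_1_r by lra.
  assert (K * q ^ m <= K * e) by (apply Rmult_le_compat_l; lra).
  nra.
Qed.

Lemma INR_cubic_rec (x : nat -> nat) :
  (forall m, x (S (S (S m))) = 2 * x (S (S m)) + x m)%nat -> cubic_rec (fun m => INR (x m)).
Proof. intros Hx m; rewrite Hx, plus_INR, mult_INR; reflexivity. Qed.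

Lemma cubic_root_exists : exists al, 11 / 5 <= al <= 221 / 100 /\ al ^ 3 - 2 * al ^ 2 - 1 = 0.
Proof.
  destruct (IVT (fun x => x ^ 3 - 2 * x ^ 2 - 1) (11 / 5) (221 / 100)) as [al Hal];
    [reg | lra | simpl; lra | simpl; lra |].
  exists al; exact Hal.
Qed.

(* Every root exceeds 2, where the cofactor of x - al below is positive. *)
Lemma cubic_root_unique (al : R) : al ^ 3 - 2 * al ^ 2 - 1 = 0 ->
  forall x, x ^ 3 - 2 * x ^ 2 - 1 = 0 <-> x = al.
Proof.
  intros Hal x; split; [|intros ->; exact Hal].
  intros Hx.
  assert (Hgt2 : forall y, y ^ 3 - 2 * y ^ 2 - 1 = 0 -> 2 < y).
  { intros y Hy; destruct (Rle_lt_dec y 2) as [Hle|]; [|assumption].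
    assert (0 <= y ^ 2) by (apply pow2_ge_0); simpl in *; nra. }
  pose proof (Hgt2 x Hx); pose proof (Hgt2 al Hal).
  assert (Hfac : (x - al) * (x ^ 2 + (al - 2) * x + al * (al - 2)) = 0).
  { replace 0 with ((x ^ 3 - 2 * x ^ 2 - 1) - (al ^ 3 - 2 * al ^ 2 - 1)) by lra; ring. }
  apply Rmult_integral in Hfac as [|Hq]; [lra|].
  assert (0 < al * (al - 2)) by nra; simpl in Hq; nra.
Qed.

Section CubicRoot.

Variable al : R.
Hypothesis al_root : al ^ 3 - 2 * al ^ 2 - 1 = 0.
Hypothesis al_bounds : 11 / 5 <= al <= 221 / 100.

Lemma cubic_defect_rec (x : nat -> R) : cubic_rec x ->
  forall m, defect al x (S (S m))
            = (2 - al) * defect al x (S m) + (2 * al - al ^ 2) * defect al x m.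
Proof.
  intros Hx m; unfold defect; rewrite Hx.
  replace (x m) with ((al ^ 3 - 2 * al ^ 2) * x m) at 1
    by (replace (al ^ 3 - 2 * al ^ 2) with 1 by lra; ring).
  ring.
Qed.

(* The defect recurrence has the two complex roots of the cubic, of modulus
   al^(-1/2) < 4/5, as characteristic roots. *)
Lemma cubic_defect_geom_bounded (x : nat -> R) : cubic_rec x -> geom_bounded (defect al x) (4 / 5).
Proof.
  intros Hx; apply (geom_bounded_second_order _ (2 - al) (2 * al - al ^ 2));
    [lra | | exact (cubic_defect_rec x Hx)].
  rewrite (Rabs_left1 (2 - al)), (Rabs_left1 (2 * al - al ^ 2)) by (simpl; nra).
  simpl; nra.
Qed.

Lemma L_defect_geom_bounded : geom_bounded (defect al (fun m => INR (L (S m)))) 2.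
Proof.
  assert (H3e : geom_bounded (defect al (fun m => INR (count 3 true m))) (4 / 5))
    by (apply cubic_defect_geom_bounded, INR_cubic_rec; intros k; apply count_cubic_rec).
  assert (H3o : geom_bounded (defect al (fun m => INR (count 3 false m))) (4 / 5))
    by (apply cubic_defect_geom_bounded, INR_cubic_rec; intros k; apply count_cubic_rec).
  assert (H1e : geom_bounded (defect al (fun m => INR (count 1 true m))) (4 / 5))
    by (apply cubic_defect_geom_bounded, INR_cubic_rec; intros k; apply count_cubic_rec).
  assert (H1o : geom_bounded (defect al (fun m => INR (count 1 false m))) 1).
  { apply (geom_bounded_first_order _
      (fun m => 2 * defect al (fun m => INR (count 3 false m)) m) 1 (4 / 5));
      [lra | | apply geom_bounded_scale, H3o].
    intros m; unfold defect.
    destruct (count_succ (S m)) as (_ & _ & _ & ->), (count_succ m) as (_ & _ & _ & ->).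
    rewrite !plus_INR, !mult_INR; change (INR 2) with 2; ring. }
  apply (geom_bounded_first_order _ (fun m =>
      defect al (fun m => INR (count 3 true m)) m + defect al (fun m => INR (count 3 false m)) m
      + defect al (fun m => INR (count 1 true m)) m + defect al (fun m => INR (count 1 false m)) m)
      2 1); [lra | |].
  - intros m; unfold defect; rewrite (L_rec (S m)), (L_rec m).
    repeat (rewrite plus_INR || rewrite mult_INR); change (INR 2) with 2; ring.
  - assert (Hle : forall u, geom_bounded u (4 / 5) -> geom_bounded u 1)
      by (intros u; apply geom_bounded_le; lra).
    apply geom_bounded_plus; [|exact H1o].
    apply geom_bounded_plus; [apply geom_bounded_plus|]; apply Hle; assumption.
Qed.

End CubicRoot.

Lemma L_lower_bound (m : nat) : 1 / 2 * (11 / 5) ^ m <= INR (L (S m)).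
Proof.
  apply (Rle_trans _ (INR (count 3 true m))); [|apply le_INR, count_le_L].
  apply (cubic_rec_lower_bound (fun m => INR (count 3 true m))); try lra.
  - apply INR_cubic_rec; intros k; apply count_cubic_rec.
  - change (count 3 true 0) with 1%nat; simpl; lra.
  - change (count 3 true 1) with 2%nat; simpl; lra.
  - change (count 3 true 2) with 4%nat; simpl; lra.
Qed.

Theorem mainTheorem6 :
  exists alpha : R,
    (forall x : R, x ^ 3 - 2 * x ^ 2 - 1 = 0 <-> x = alpha) /\
    Un_cv (fun n : nat => INR (L (S n)) / INR (L n)) alpha.
Proof.
  destruct cubic_root_exists as [al [Hbounds Hroot]].
  exists al; split; [exact (cubic_root_unique al Hroot)|].
  assert (Hratio : Un_cv (fun m => INR (L (S (S m))) / INR (L (S m))) al).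
  { apply (ratio_cv_of_defect al (1 / 2) (11 / 5) 2 (fun m => INR (L (S m))));
      [lra | lra | exact L_lower_bound |].
    exact (L_defect_geom_bounded al Hroot Hbounds). }
  apply (CV_shift _ 1); refine (Un_cv_ext _ _ _ al Hratio).
  intros m; rewrite Nat.add_1_r; reflexivity.
Qed.
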